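(* Let $\mathcal{T}=(\mathbb{K}_i,\phi_i)_{i=0,\dots,m}$ be a tower with $\mathbb{K}_0=\emptyset$ whose maps are elementary inclusions or elementary contractions, named according to the naming convention below, and let $\hat{\mathbb{K}}_0,\dots,\hat{\mathbb{K}}_m$ be the active small coning construction. For every $i\in\{0,\dots,m\}$, the set of vertices of $\mathbb{K}_i$ equals the set of active vertices of $\hat{\mathbb{K}}_i$.
   Context: Elementary inclusion: $\mathbb{K}_{i+1}=\mathbb{K}_i\cup\{\sigma\}$, $\sigma\notin\mathbb{K}_i$, $\phi_i$ the inclusion. Elementary contraction of distinct vertices $u,v$ of $\mathbb{K}_i$: for one of them, say $v$, the vertex set of $\mathbb{K}_{i+1}$ is that of $\mathbb{K}_i$ minus $v$, $\phi_i(u)=\phi_i(v)=u$, and $\phi_i$ is the identity on other vertices. Active small coning construction: $\hat{\mathbb{K}}_0=\emptyset$; vertices flagged active/inactive, a simplex is active iff all its vertices are; $\mathrm{Act}\overline{\mathrm{St}}(w,\hat{\mathbb{K}}_i)$ = active simplices of $\hat{\mathbb{K}}_i$ in the closed star of $w$. Inclusion of $\sigma$: $\hat{\mathbb{K}}_{i+1}=\hat{\mathbb{K}}_i\cup\{\sigma\}$, a new vertex marked active. Contraction of $u,v$: if $|\mathrm{Act}\overline{\mathrm{St}}(u,\hat{\mathbb{K}}_i)|\le|\mathrm{Act}\overline{\mathrm{St}}(v,\hat{\mathbb{K}}_i)|$, $\hat{\mathbb{K}}_{i+1}=\hat{\mathbb{K}}_i\cup\{\{v\}\cup\tau:\tau\in\mathrm{Act}\overline{\mathrm{St}}(u,\hat{\mathbb{K}}_i)\}$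 and $u$ is marked inactive; otherwise the same with $u$ and $v$ exchanged. Naming convention: each contraction maps $u$ and $v$ to the vertex not marked inactive in that step. *)

From HB Require Import structures.
From mathcomp Require Import all_boot finmap.
Set Implicit Arguments. Unset Strict Implicit. Unset Printing Implicit Defensive.
Local Open Scope fset_scope.

Section Defs.
Variable V : choiceType.

Definition simplex := {fset V}.
Definition complex := {fset {fset V}}.

Definition is_complex (K : complex) : Prop :=
  forall s, s \in K -> s != fset0 /\ (forall t, t `<=` s -> t != fset0 -> t \in K).

Definition vertices (K : complex) : {fset V} := \bigcup_(s <- K) s.

Definition closed_star (w : V) (K : complex) : complex :=
  [fset t | s in K, t in fpowerset s & (w \in s) && (t != fset0)].

Definition act_closed_star (A : {fset V}) (w : V) (K : complex) : complex :=
  [fset t in closed_star w K | t `<=` A].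

Definition active_vertices (A : {fset V}) (K : complex) : {fset V} :=
  [fset w in vertices K | w \in A].

Definition im_complex (f : V -> V) (K : complex) : complex :=
  [fset [fset f x | x in s] | s : {fset V} in K].

Definition contr_map (del keep : V) : V -> V :=
  fun x => if x == del then keep else x.

(* One step of the tower together with the active small coning construction.
   (K, H, A) -> (K', H', A'): K the tower complex, H = \hat K, A the set of
   vertices flagged active. The contraction step follows the naming convention:
   the surviving vertex is the one not marked inactive. *)
Definition joint_step (K : complex) (H : complex) (A : {fset V})
    (K' : complex) (H' : complex) (A' : {fset V}) : Prop :=
  (exists sigma : simplex,
      sigma \notin K /\ K' = sigma |` K /\ H' = sigma |` H /\
      A' = (if #|` sigma| == 1 then A `|` sigma else A))
  \/
  (exists u v : V,
      u \in vertices K /\ v \in vertices K /\ u != v /\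
      let del := if #|` act_closed_star A u H| <= #|` act_closed_star A v H|
                 then u else v in
      let keep := if #|` act_closed_star A u H| <= #|` act_closed_star A v H|
                  then v else u in
      K' = im_complex (contr_map del keep) K /\
      H' = H `|` [fset keep |` t | t in act_closed_star A del H] /\
      A' = A `\ del).

End Defs.

From HB Require Import structures.
From mathcomp Require Import all_boot finmap.
Set Implicit Arguments. Unset Strict Implicit. Unset Printing Implicit Defensive.
Local Open Scope fset_scope.

(* Induction on i: each joint step preserves the equality.  An inclusion of
   sigma either creates a new vertex (sigma is a singleton, and this vertex is
   flagged active) or, as K_{i+1} is closed under faces, only uses vertices of
   K_i.  A contraction removes the vertex [del] from K_i and flags it
   inactive; the coned simplices [keep |` t] add no new vertex to \hat K_i,
   since [keep] is already an active vertex and each [t] is a face of a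
   simplex of \hat K_i. *)

Section Vertices.
Variable V : choiceType.
Implicit Types (K H B : complex V) (A s : {fset V}) (x : V).

Lemma verticesP K x : reflect (exists2 s, s \in K & x \in s) (x \in vertices K).
Proof.
apply: (iffP idP) => [/bigfcupP[s /andP[sK _] xs]|[s sK xs]]; first by exists s.
by apply/bigfcupP; exists s; rewrite ?sK.
Qed.

Lemma in_active_vertices A K x :
  (x \in active_vertices A K) = (x \in vertices K) && (x \in A).
Proof. by rewrite !inE. Qed.

Lemma vertices0 : vertices (fset0 : complex V) = fset0.
Proof. by apply/fsetP => x; rewrite inE; apply/verticesP => -[s]; rewrite inE. Qed.

Lemma in_verticesU K B x :
  (x \in vertices (K `|` B)) = (x \in vertices K) || (x \in vertices B).
Proof.
apply/verticesP/orP => [[s]|[/verticesP[s sK xs]|/verticesP[s sB xs]]].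
- by rewrite in_fsetU => /orP[sK|sB] xs; [left|right]; apply/verticesP; exists s.
- by exists s; rewrite // in_fsetU sK.
- by exists s; rewrite // in_fsetU sB orbT.
Qed.

Lemma in_verticesU1 K s x :
  (x \in vertices (s |` K)) = (x \in s) || (x \in vertices K).
Proof.
rewrite in_verticesU; congr (_ || _).
by apply/verticesP/idP => [[t /fset1P ->]|xs] //; exists s; rewrite ?inE.
Qed.

Lemma vertices_im_complexP f K x :
  reflect (exists2 y, y \in vertices K & x = f y) (x \in vertices (im_complex f K)).
Proof.
apply: (iffP (verticesP _ _)) => [[_ /imfsetP[s /= sK ->] /imfsetP[y /= ys ->]]|].
  by exists y => //; apply/verticesP; exists s.
move=> [y /verticesP[s sK ys] ->]; exists [fset f z | z in s].
  by apply/imfsetP; exists s.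
by apply/imfsetP; exists y.
Qed.

Lemma in_vertices_contr K d k x : k \in vertices K -> k != d ->
  (x \in vertices (im_complex (contr_map d k) K)) = (x != d) && (x \in vertices K).
Proof.
move=> kK kd; apply/vertices_im_complexP/andP => [[y yK ->]|[xd xK]].
  by rewrite /contr_map; case: (eqVneq y d) => [_|yd]; split.
by exists x; rewrite // /contr_map (negbTE xd).
Qed.

Lemma act_closed_star_face A w H t : t \in act_closed_star A w H ->
  t `<=` A /\ exists2 s, s \in H & t `<=` s.
Proof.
rewrite !inE => /andP[/imfset2P[s sH [t' + ->]] tA].
by rewrite !inE fpowersetE => /andP[ts _]; split => //; exists s.
Qed.

Lemma vertices_cone_sub A d k H : k \in vertices H ->
  vertices [fset k |` t | t in act_closed_star A d H] `<=` vertices H.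
Proof.
move=> kH; apply/fsubsetP => x /verticesP[_ /imfsetP[t /= tS ->]].
have [_ [s sH ts]] := act_closed_star_face tS.
case/fset1UP => [-> //|xt].
by apply/verticesP; exists s => //; apply: (fsubsetP ts).
Qed.

Lemma sub_vertices_complex K s : is_complex (s |` K) -> #|` s| != 1 ->
  s `<=` vertices K.
Proof.
move=> cK s_n1; apply/fsubsetP => z zs.
have [_ /(_ [fset z])] := cK s (fsetU11 _ _).
have z_neq0 : [fset z] != fset0 by apply/fset0Pn; exists z; rewrite inE.
rewrite fsub1set zs => /(_ isT z_neq0) /fset1UP[zs1|zK].
  by move: s_n1; rewrite -zs1 cardfs1.
by apply/verticesP; exists [fset z]; rewrite ?inE.
Qed.

Lemma inclusion_vertices K H A s :
  vertices K = active_vertices A H -> is_complex (s |` K) ->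
  vertices (s |` K) =
  active_vertices (if #|` s| == 1 then A `|` s else A) (s |` H).
Proof.
move=> KH cK; apply/fsetP => x.
rewrite in_active_vertices !in_verticesU1 KH in_active_vertices.
case: ifP => [/cardfs1P[y ->]|/negbT s_n1].
  by rewrite !inE; case: (x == y); case: (x \in vertices H); case: (x \in A).
case xs: (x \in s) => //=.
by move: (fsubsetP (sub_vertices_complex cK s_n1) x xs); rewrite KH inE => /andP[].
Qed.

Lemma contraction_vertices K H A d k :
  vertices K = active_vertices A H ->
  k \in vertices K -> k != d ->
  vertices (im_complex (contr_map d k) K) =
  active_vertices (A `\ d) (H `|` [fset k |` t | t in act_closed_star A d H]).
Proof.
move=> KH kK kd.
have kH : k \in vertices H by move: kK; rewrite KH inE => /andP[].
apply/fsetP => x; rewrite in_active_vertices in_verticesU in_fsetD1.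
rewrite (orb_idr (fsubsetP (vertices_cone_sub A d kH) x)).
by rewrite in_vertices_contr // KH in_active_vertices andbCA.
Qed.

Lemma joint_step_vertices K H A K' H' A' :
  vertices K = active_vertices A H -> is_complex K' ->
  joint_step K H A K' H' A' -> vertices K' = active_vertices A' H'.
Proof.
move=> KH cK' [[s [_ [EK [-> ->]]]]|[u [v [uK [vK [uv]]]]]].
  by rewrite EK; apply: inclusion_vertices; rewrite -?EK.
by rewrite /=; case: ifP => _ [-> [-> ->]]; apply: contraction_vertices;
  rewrite // eq_sym.
Qed.

End Vertices.

Theorem lemma3 (V : choiceType) (m : nat)
    (K H : nat -> complex V) (A : nat -> {fset V}) :
  K 0 = fset0 -> H 0 = fset0 -> A 0 = fset0 ->
  (forall i, i <= m -> is_complex (K i)) ->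
  (forall i, i < m -> joint_step (K i) (H i) (A i) (K i.+1) (H i.+1) (A i.+1)) ->
  forall i, i <= m -> vertices (K i) = active_vertices (A i) (H i).
Proof.
move=> K0 H0 A0 cK st; elim => [_|i IHi lt_im].
  by rewrite K0 H0 A0 vertices0; apply/fsetP => x; rewrite in_active_vertices !inE andbF.
exact: joint_step_vertices (IHi (ltnW lt_im)) (cK _ lt_im) (st _ lt_im).
Qed.
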